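(* Let $a>0$, let $m$ be a positive integer, and let $l=(l_r,l_0,\dots,l_4)$ be a tuple of nonnegative integers with $s_l:=-l_r+\sum_{i=0}^4 l_i$. Let $f_l=r^{-l_r}x_0^{l_0}x_1^{l_1}\cdots x_4^{l_4}$ on $B_a$, and regard $r_o^m f_l$ as a function on $\tilde{B}_a=B_a\cup L$ by setting it identically zero on $L$. Then $r_o^m f_l$ is of class $C^{k-1}$ on $\tilde{B}_a$ but not of class $C^k$, where $k=\min\{m,m+s_l\}$.
   Context: On $\mathbb{R}^5$ with coordinates $x=(x_0,\dots,x_4)$ put $r=\sqrt{x_1^2+x_2^2+x_3^2+x_4^2}$, $L=\{x: r\le|x_0|\}$, $L_o=\{x: r=|x_0|\}$. Define $r_o=0$ on $L$ and $r_o=\frac{r^2-x_0^2}{r}$ on $\mathbb{R}^5\setminus L$. For $a>0$, $B_a=\{x: 0<r_o<1/a\}$ and $\tilde{B}_a=B_a\cup L$ (an open subset of $\mathbb{R}^5$). *)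

From HB Require Import structures.
From mathcomp Require Import all_boot all_order all_algebra.
From mathcomp Require Import all_classical all_reals all_analysis.
Set Implicit Arguments. Unset Strict Implicit. Unset Printing Implicit Defensive.
Import Order.TTheory GRing.Theory Num.Theory.
Import numFieldNormedType.Exports.
Local Open Scope classical_set_scope.
Local Open Scope ring_scope.

Section Defs.
Variable R : realType.
Notation V := 'rV[R]_5.

Definition coord (x : V) (i : 'I_5) : R := x ord0 i.

Definition rr (x : V) : R :=
  Num.sqrt (\sum_(i < 5 | i != ord0) coord x i ^+ 2).

Definition Lcone : set V := [set x | rr x <= `|coord x ord0|].

Definition ro (x : V) : R :=
  if rr x <= `|coord x ord0| then 0 else (rr x ^+ 2 - coord x ord0 ^+ 2) / rr x.

Definition Ba (a : R) : set V := [set x | 0 < ro x < a^-1].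
Definition Bt (a : R) : set V := Ba a `|` Lcone.

Definition fl (lr : nat) (l : 'I_5 -> nat) (x : V) : R :=
  rr x ^- lr * \prod_(i < 5) coord x i ^+ l i.

Definition sl (lr : nat) (l : 'I_5 -> nat) : int :=
  - (lr%:Z) + (\sum_(i < 5) (l i)%:Z).

Definition gml (m lr : nat) (l : 'I_5 -> nat) (x : V) : R :=
  if rr x <= `|coord x ord0| then 0 else ro x ^+ m * fl lr l x.

Definition ebase (i : 'I_5) : V := delta_mx ord0 i.

Definition partial (i : 'I_5) (f : V -> R) : V -> R := fun x => 'D_(ebase i) f x.

Fixpoint Ck (k : nat) (f : V -> R) (U : set V) : Prop :=
  match k with
  | 0 => forall x, U x -> {for x, continuous f}
  | k'.+1 => (forall x, U x -> differentiable f x) /\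
             forall i : 'I_5, Ck k' (partial i f) U
  end.

End Defs.

(* Write Q = r^2 - x0^2, so that L = {Q <= 0} and r_o^m f_l = Q^m r^-(m + l_r) x^l off L.
   Call c Q^p r^-q x^a a term of order N when p >= N and its degree of homogeneity
   2p + |a| - q is at least N.  A partial derivative of a term of order N + 1 is a sum of
   terms of order N, and a term of order N, extended by 0 on L, is O(|z - y|^N) at every
   y in L: at points with x0 <> 0 because Q vanishes there to first order while r stays
   away from 0, and at the origin by homogeneity.  As r_o^m f_l is a term of order k, its
   derivatives of order < k thus extend by 0 differentiably across L.
   Conversely, if f is C^k and vanishes on the open set {Q < 0}, so does its k-th
   derivative in x1, which is therefore small near every point of L_o; by the mean value
   theorem applied k times, |f| = o(h^k) at the end of any short x1-segment of length h
   starting in {Q < 0}.  Explicit segments through (2c, c, c, c, c) and near the origin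
   violate this for k = m and k = m + s_l respectively. *)

From Pilot Require Import Defs.
From HB Require Import structures.
From mathcomp Require Import all_boot all_order all_algebra.
From mathcomp Require Import all_classical all_reals all_analysis.
From mathcomp Require Import ring lra zify.
Import Order.TTheory GRing.Theory Num.Theory.
Import numFieldNormedType.Exports.
Local Open Scope classical_set_scope.
Local Open Scope ring_scope.
Set Implicit Arguments. Unset Strict Implicit. Unset Printing Implicit Defensive.

Section NormedCalculus.
Variables (R : realType) (V W : normedModType R).

Lemma near_normP (y : V) (P : V -> Prop) :
  (\forall z \near y, P z) <-> exists2 d : R, 0 < d & forall z, `|z - y| < d -> P z.
Proof.
rewrite -nbhs_nearE nbhs_ballP.
split => -[d d0 Hd]; exists d => // z.
  by move=> zy; apply: Hd; rewrite -ball_normE /ball_ /= distrC.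
by rewrite -ball_normE /ball_ /= distrC => /Hd.
Qed.

Lemma near_scaled_dist_le (y : V) (C e : R) : 0 < e ->
  \forall z \near y, C * `|z - y| <= e.
Proof.
move=> e0; have C1 : 0 < `|C| + 1 by rewrite ltr_pwDr // normr_ge0.
apply/(near_normP y (fun z => _ <= _)); exists (e / (`|C| + 1)); first by rewrite divr_gt0.
move=> z ze; have nz := normr_ge0 (z - y).
apply: (@le_trans _ _ ((`|C| + 1) * `|z - y|)).
  by apply: ler_wpM2r => //; apply: le_trans (ler_norm C) _; rewrite lerDl.
by rewrite mulrC -ler_pdivlMr // ltW.
Qed.

Lemma continuous_at_linear_bound (h : V -> W) y (C : R) : h y = 0 ->
  (\forall z \near y, `|h z| <= C * `|z - y|) -> {for y, continuous h}.
Proof.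
move=> hy hC; apply/(cvgrPdist_le (FF := nbhs_filter y)) => e e0.
apply: filterS2 hC (near_scaled_dist_le y C e0) => z hz Cz.
by rewrite hy sub0r normrN; exact: le_trans hz Cz.
Qed.

Lemma differentiable_quadratic_bound (h : V -> W) y (C : R) : h y = 0 ->
  (\forall z \near y, `|h z| <= C * `|z - y| ^+ 2) ->
  differentiable h y /\ 'd h y = 0 :> (V -> W).
Proof.
move=> hy0 /nbhs0P hC.
have o_id : h \o shift y = cst (h y) + \0 +o_ (0 : V) id.
  apply/eqaddoP => e e0; apply: filterS2 hC (near_scaled_dist_le 0 C e0) => u hu Cu.
  rewrite /= hy0 !fctE /= addr0 subr0 addrC; apply: le_trans hu _.
  by rewrite subr0 in Cu; rewrite [y + u]addrC addrK expr2 mulrA ler_wpM2r.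
have dh : 'd h y = 0 :> (V -> W).
  by apply: diff_unique => //; exact: cst_continuous.
split => //; apply/diff_locallyP; rewrite dh; split => //.
exact: cst_continuous.
Qed.

Lemma near_eq_differentiable (f g : V -> W) y : (\forall z \near y, f z = g z) ->
  differentiable g y -> differentiable f y.
Proof.
move=> fg dg.
have -> : f = g + (f - g) by apply/funext => z; rewrite !fctE addrC subrK.
apply: differentiableD => //.
have [] // := @differentiable_quadratic_bound (f - g) y 0.
- by rewrite !fctE (nbhs_singleton fg) subrr.
- by near=> z; rewrite !fctE (near fg z) // subrr normr0 mul0r.
Unshelve. all: by end_near. Qed.

Lemma is_derive_along_line (h : V -> W) (v p : V) (t : R) :
  differentiable h (t *: v + p) ->
  is_derive t 1 (fun s : R => h (s *: v + p)) ('D_v h (t *: v + p)).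
Proof.
move=> dh.
have quotE : (fun u : R => u^-1 *: (((fun s : R => h (s *: v + p)) \o shift t) (u *: 1)
            - (fun s : R => h (s *: v + p)) t)) =
         (fun u : R => u^-1 *: ((h \o shift (t *: v + p)) (u *: v) - h (t *: v + p))).
  apply/funext => u /=; congr (_ *: (h _ - _)).
  by rewrite [_%:A]mulr1 scalerDl addrA.
have dv : derivable h (t *: v + p) v by exact: diff_derivable.
by apply: DeriveDef; rewrite /derivable /derive quotE.
Qed.

Lemma is_derive_of_const_quotient (f : V -> W) y v (l : W) :
  (forall h : R, h != 0 -> h^-1 *: (f (h *: v + y) - f y) = l) -> is_derive y v f l.
Proof.
move=> fq.
have ql : (fun h : R => h^-1 *: (f (h *: v + y) - f y)) @ 0^' --> l.
  by apply: cvg_near_cst; near=> h; apply: fq; near: h; exact: nbhs_dnbhs_neq.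
by apply: DeriveDef; [apply/cvg_ex; exists l | exact: cvg_lim ql].
Unshelve. all: by end_near. Qed.

Lemma is_derive0_const_along (f : V -> W) y v :
  (forall h : R, f (h *: v + y) = f y) -> is_derive y v f 0.
Proof.
by move=> fc; apply: is_derive_of_const_quotient => h _; rewrite fc subrr scaler0.
Qed.

Lemma is_derive_exp (f : V -> R) n y v (df : R) : is_derive y v f df ->
  is_derive y v (fun z => f z ^+ n) (n%:R * f y ^+ n.-1 * df).
Proof. by move/(is_deriveX n); rewrite exprfctE. Qed.

Lemma differentiable_exp (f : V -> R) n y : differentiable f y ->
  differentiable (fun z => f z ^+ n) y.
Proof.
case: n => [_|n /(differentiableX n)]; last by rewrite exprfctE.
by under eq_fun do rewrite expr0; exact: differentiable_cst.
Qed.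

Lemma is_derive_inv (f : V -> R) y v (df : R) : f y != 0 -> is_derive y v f df ->
  is_derive y v (fun z => (f z)^-1) (- (f y) ^- 2 * df).
Proof.
move=> fy0 [fd <-]; apply: DeriveDef; first exact: derivableV.
by rewrite deriveV.
Qed.

Lemma iter_derive_eq0_on_open (f : V -> W) (v : V) (O : set V) j : open O ->
  (forall x, O x -> f x = 0) ->
  forall x, O x -> iter j (fun g x => 'D_v g x) f x = 0.
Proof.
move=> oO f0; elim: j => [|j IH] x Ox //=; first exact: f0.
have E : \forall z \near x, iter j (fun g x => 'D_v g x) f z = cst 0 z.
  by apply: filterS (open_nbhs_nbhs (conj oO Ox)) => z; exact: IH.
by rewrite (near_eq_derive _ E) derive_cst.
Qed.

End NormedCalculus.

Lemma iterated_mvt_bound (R : realType) (psi : nat -> R -> R) K (A B M : R) : A < B ->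
  (forall j, (j < K)%N -> forall u, A <= u <= B -> is_derive u 1 (psi j) (psi j.+1 u)) ->
  (forall j, (j < K)%N -> psi j A = 0) ->
  (forall u, A <= u <= B -> `|psi K u| <= M) ->
  `|psi 0%N B| <= M * (B - A) ^+ K.
Proof.
move=> AB dpsi psiA psiK.
have M0 : 0 <= M by apply: le_trans (psiK A _); rewrite ?normr_ge0 // lexx ltW.
suff G i : (i <= K)%N -> forall u, A <= u <= B -> `|psi (K - i)%N u| <= M * (u - A) ^+ i.
  by have := G K (leqnn K) B; rewrite subnn; apply; rewrite lexx ltW.
elim: i => [|i IH] iK u /andP[Au uB].
  by rewrite subn0 expr0 mulr1; apply: psiK; rewrite Au.
set j := (K - i.+1)%N.
have jK : (j < K)%N by rewrite /j; lia.
have ji : (j.+1 = K - i)%N by rewrite /j; lia.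
have [->|uA] := eqVneq u A; first by rewrite psiA // normr0 subrr expr0n mulr0.
have Au' : A < u by rewrite lt_neqAle eq_sym uA Au.
have dj y : A <= y <= u -> is_derive y 1 (psi j) (psi j.+1 y).
  by case/andP=> y1 y2; apply: dpsi; rewrite ?y1 ?(le_trans y2).
have [c c_in] : exists2 c, c \in `]A, u[ & psi j u - psi j A = psi j.+1 c * (u - A).
  apply: MVT => // [y|]; first by rewrite in_itv /= => /andP[y1 y2]; apply: dj; rewrite !ltW.
  by apply: derivable_within_continuous => y; rewrite in_itv /= => /dj [].
rewrite psiA // subr0 => ->.
move: c_in; rewrite in_itv /= => /andP[c1 c2].
rewrite normrM (ger0_norm (x := u - A)) ?subr_ge0 //.
have {}IH : `|psi j.+1 c| <= M * (c - A) ^+ i.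
  by rewrite ji; apply: IH; [exact: ltnW | rewrite (ltW c1) (le_trans (ltW c2))].
apply: (le_trans (ler_wpM2r _ IH)); first by rewrite subr_ge0.
rewrite exprSr mulrA; apply: ler_wpM2r; first by rewrite subr_ge0.
apply: ler_wpM2l => //; apply: lerXn2r; rewrite ?inE ?nnegrE ?subr_ge0 ?(ltW c1) //.
by apply: lerB => //; exact: ltW.
Qed.

Section ConeGeometry.
Variable R : realType.
Notation V := 'rV[R]_5.
Implicit Types x y z : V.
Local Notation cd := (@Defs.coord R).

Lemma coordD x y i : cd (x + y) i = cd x i + cd y i.
Proof. by rewrite /Defs.coord mxE. Qed.

Lemma coordZ (c : R) x i : cd (c *: x) i = c * cd x i.
Proof. by rewrite /Defs.coord mxE. Qed.

Lemma coordB x y i : cd (x - y) i = cd x i - cd y i.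
Proof. by rewrite /Defs.coord !mxE. Qed.

Lemma coord_ebase i j : cd (ebase R i) j = (i == j)%:R.
Proof. by rewrite /Defs.coord /ebase mxE eqxx eq_sym. Qed.

Lemma abs_coord_le_norm x i : `|cd x i| <= `|x|.
Proof.
rewrite [X in _ <= X]mx_normrE.
exact: (le_bigmax _ (fun ij : 'I_1 * 'I_5 => `|x ij.1 ij.2|) (ord0, i)).
Qed.

Lemma norm_le_coord x (B : R) : 0 <= B -> (forall i, `|cd x i| <= B) -> `|x| <= B.
Proof.
move=> B0 xB; rewrite [X in X <= _]mx_normrE.
by apply: bigmax_le => // -[i j] _ /=; rewrite (ord1 i); exact: xB.
Qed.

Lemma norm_ebase i : `|ebase R i| <= 1.
Proof.
by apply: norm_le_coord => // j; rewrite coord_ebase; case: (i == j); rewrite ?normr1 ?normr0.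
Qed.

Definition rsq x : R := \sum_(i < 5 | i != ord0) cd x i ^+ 2.

Definition cone_form x : R := rsq x - cd x ord0 ^+ 2.

Lemma rsq_ge0 x : 0 <= rsq x.
Proof. by apply: sumr_ge0 => i _; exact: sqr_ge0. Qed.

Lemma rr_sqr x : rr x ^+ 2 = rsq x.
Proof. by rewrite /rr sqr_sqrtr // rsq_ge0. Qed.

Lemma rr_ge0 x : 0 <= rr x.
Proof. exact: sqrtr_ge0. Qed.

Lemma rr_le_abs_coord0E x : (rr x <= `|cd x ord0|) = (cone_form x <= 0).
Proof. by rewrite /rr -sqrtr_sqr ler_sqrt ?sqr_ge0 // subr_le0. Qed.

Lemma abs_coord0_lt_rr x : 0 < cone_form x -> `|cd x ord0| < rr x.
Proof. by rewrite ltNge -rr_le_abs_coord0E -ltNge. Qed.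

Lemma rr_gt0 x : 0 < cone_form x -> 0 < rr x.
Proof. by move/abs_coord0_lt_rr; apply: le_lt_trans. Qed.

Lemma abs_coord_le_rr x i : i != ord0 -> `|cd x i| <= rr x.
Proof.
move=> i0; rewrite -sqrtr_sqr /rr; apply: ler_wsqrtr.
by rewrite (bigD1 i) //= lerDl; apply: sumr_ge0 => j _; exact: sqr_ge0.
Qed.

Lemma cone_form_le_rr_sqr x : cone_form x <= rr x ^+ 2.
Proof. by rewrite rr_sqr lerBlDr lerDl sqr_ge0. Qed.

Lemma norm_le_rr x : 0 < cone_form x -> `|x| <= rr x.
Proof.
move=> Qx; apply: norm_le_coord => [|i]; first exact: rr_ge0.
have [->|i0] := eqVneq i ord0; first exact/ltW/abs_coord0_lt_rr.
exact: abs_coord_le_rr.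
Qed.

Lemma rr_le_norm x : rr x <= 3 * `|x|.
Proof.
rewrite -ler_sqr ?nnegrE ?rr_ge0 ?mulr_ge0 // rr_sqr.
apply: (@le_trans _ _ (\sum_(i < 5) `|x| ^+ 2)).
  rewrite /rsq big_mkcond /=; apply: ler_sum => i _; case: ifP => _; last exact: sqr_ge0.
  by rewrite -real_normK ?num_real // lerXn2r ?nnegrE ?abs_coord_le_norm.
by rewrite sumr_const card_ord -mulr_natr; nra.
Qed.

Lemma cone_form_lipschitz x y :
  `|cone_form x - cone_form y| <= 6 * ((`|x| + `|y|) * `|x - y|).
Proof.
set e := (`|x| + `|y|) * `|x - y|.
have e0 : 0 <= e by rewrite mulr_ge0 ?addr_ge0.
have sq i : `|cd x i ^+ 2 - cd y i ^+ 2| <= e.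
  have -> : cd x i ^+ 2 - cd y i ^+ 2 = (cd x i + cd y i) * (cd x i - cd y i) by ring.
  rewrite normrM -coordB; apply: ler_pM; rewrite ?normr_ge0 ?abs_coord_le_norm //.
  by apply: le_trans (ler_normD _ _) _; rewrite lerD ?abs_coord_le_norm.
have -> : cone_form x - cone_form y =
    \sum_(i < 5 | i != ord0) (cd x i ^+ 2 - cd y i ^+ 2) - (cd x ord0 ^+ 2 - cd y ord0 ^+ 2).
  by rewrite /cone_form /rsq sumrB; ring.
have -> : 6 * e = \sum_(i < 5) e + e by rewrite sumr_const card_ord -mulr_natl; ring.
apply: le_trans (ler_normB _ _) _; rewrite lerD //.
apply: le_trans (ler_norm_sum _ _ _) _; rewrite big_mkcond.
by apply: ler_sum => i _; case: ifP.
Qed.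

End ConeGeometry.

Section ConeDerivatives.
Variable R : realType.
Notation V := 'rV[R]_5.
Implicit Types x y z : V.
Local Notation cd := (@Defs.coord R).

Definition monomial (a : 'I_5 -> nat) x : R := \prod_(j < 5) cd x j ^+ a j.

Definition incr_at (k : 'I_5) (a : 'I_5 -> nat) j := if j == k then (a j).+1 else a j.
Definition decr_at (k : 'I_5) (a : 'I_5 -> nat) j := if j == k then (a j).-1 else a j.

Definition cone_sign (k : 'I_5) : R := if k == ord0 then -1 else 1.

Lemma monomial_incr_at k a x : monomial (incr_at k a) x = cd x k * monomial a x.
Proof.
rewrite /monomial (bigD1 k) //= [in RHS](bigD1 k) //= /incr_at eqxx exprS -mulrA.
by congr (_ * (_ * _)); apply: eq_bigr => j /negbTE ->.
Qed.

Lemma coord_shift_ebase (h : R) k y j : cd (h *: ebase R k + y) j = h * (k == j)%:R + cd y j.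
Proof. by rewrite coordD coordZ coord_ebase. Qed.

Lemma is_derive_coord y v j : is_derive y v (fun z => cd z j) (cd v j).
Proof.
apply: is_derive_of_const_quotient => h h0.
by rewrite coordD coordZ addrK /GRing.scale /= mulrA mulVf // mul1r.
Qed.

Lemma is_derive_rsq y k : is_derive y (ebase R k) (@rsq R) ((k != ord0)%:R * (2 * cd y k)).
Proof.
have [->|k0] := eqVneq k ord0.
  rewrite mul0r; apply: is_derive0_const_along => h; apply: eq_bigr => j j0.
  by rewrite coord_shift_ebase eq_sym (negbTE j0) mulr0 add0r.
have -> : @rsq R = fun z => cd z k ^+ 2 + \sum_(j < 5 | (j != ord0) && (j != k)) cd z j ^+ 2.
  by apply/funext => z; rewrite /rsq (bigD1 k).
have rest : is_derive y (ebase R k)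
    (fun z => \sum_(j < 5 | (j != ord0) && (j != k)) cd z j ^+ 2) 0.
  apply: is_derive0_const_along => h; apply: eq_bigr => j /andP[_ jk].
  by rewrite coord_shift_ebase eq_sym (negbTE jk) mulr0 add0r.
apply: is_derive_eq (is_deriveD (is_deriveX 2 (is_derive_coord y (ebase R k) k)) rest) _.
by rewrite coord_ebase eqxx /= mulr1n expr1 addr0 mul1r [_ *: _]mulr1.
Qed.

Lemma is_derive_cone_form y k :
  is_derive y (ebase R k) (@cone_form R) (2 * cone_sign k * cd y k).
Proof.
have dx0 := is_deriveX 2 (is_derive_coord y (ebase R k) ord0).
apply: is_derive_eq (is_deriveD (is_derive_rsq y k) (is_deriveN dx0)) _.
by rewrite coord_ebase /cone_sign /GRing.scale /=; case: (eqVneq k ord0) => [->|k0] /=; ring.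
Qed.

Lemma is_derive_monomial y k a :
  is_derive y (ebase R k) (monomial a) ((a k)%:R * monomial (decr_at k a) y).
Proof.
have -> : monomial a = fun z => cd z k ^+ a k * \prod_(j < 5 | j != k) cd z j ^+ a j.
  by apply/funext => z; rewrite /monomial (bigD1 k).
have rest : is_derive y (ebase R k) (fun z => \prod_(j < 5 | j != k) cd z j ^+ a j) 0.
  apply: is_derive0_const_along => h; apply: eq_bigr => j jk.
  by rewrite coord_shift_ebase eq_sym (negbTE jk) mulr0 add0r.
apply: is_derive_eq (is_deriveM (is_derive_exp (a k) (is_derive_coord y (ebase R k) k)) rest) _.
rewrite /monomial [in RHS](bigD1 k) //= /decr_at eqxx coord_ebase eqxx.
rewrite [in RHS](eq_bigr (fun j => cd y j ^+ a j)); last by move=> j /negbTE ->.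
rewrite /GRing.scale /=; ring.
Qed.

Lemma differentiable_rsq y : differentiable (@rsq R) y.
Proof.
have -> : @rsq R = \sum_(i < 5) (fun z => (i != ord0)%:R * cd z i ^+ 2).
  apply/funext => z; rewrite fct_sumE /rsq big_mkcond; apply: eq_bigr => i _.
  by case: (i != ord0); rewrite ?mul1r ?mul0r.
apply: differentiable_sum => i; apply: differentiableM => //.
by apply: differentiable_exp; exact: differentiable_coord.
Qed.

Lemma differentiable_cone_form y : differentiable (@cone_form R) y.
Proof.
apply: differentiableD; first exact: differentiable_rsq.
by apply/differentiableN/differentiable_exp; exact: differentiable_coord.
Qed.

Lemma differentiable_rr y : 0 < rr y -> differentiable (@rr R) y.
Proof.
move=> ry; have -> : @rr R = Num.sqrt \o @rsq R by [].
apply: differentiable_comp; first exact: differentiable_rsq.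
apply/derivable1_diffP.
by have [] := is_derive1_sqrt (x := rsq y); rewrite // -sqrtr_gt0.
Qed.

Lemma is_derive_rr y k : 0 < rr y ->
  is_derive y (ebase R k) (@rr R) ((k != ord0)%:R * cd y k / rr y).
Proof.
move=> ry; have r0 : rr y != 0 by rewrite gt_eqF.
have dr : derivable (@rr R) y (ebase R k) by exact/diff_derivable/differentiable_rr.
have dr2 : is_derive y (ebase R k) (fun z => rr z ^+ 2) ((k != ord0)%:R * (2 * cd y k)).
  have -> : (fun z => rr z ^+ 2) = @rsq R by apply/funext => z; rewrite rr_sqr.
  exact: is_derive_rsq.
have Dr : 2%:R * rr y ^+ 1 * 'D_(ebase R k) (@rr R) y = (k != ord0)%:R * (2 * cd y k).
  by rewrite -(@derive_val _ _ _ _ _ _ _ (is_derive_exp 2 (derivableP dr)))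
    (@derive_val _ _ _ _ _ _ _ dr2).
apply: DeriveDef => //; apply: (mulfI (x := 2 * rr y)); first by rewrite mulf_neq0.
by rewrite expr1 in Dr; rewrite mulrA Dr; field.
Qed.

Lemma differentiable_monomial a y : differentiable (monomial a) y.
Proof.
have -> : monomial a = \prod_(j < 5) (fun z => cd z j ^+ a j).
  by apply/funext => z; rewrite /monomial fct_prodE.
apply: (big_ind (fun f : V -> R => differentiable f y)) => //.
- by move=> f g; exact: differentiableM.
- by move=> j _; apply: differentiable_exp; exact: differentiable_coord.
Qed.

End ConeDerivatives.

Section ConeTerms.
Variable R : realType.
Notation V := 'rV[R]_5.
Implicit Types x y z : V.
Local Notation cd := (@Defs.coord R).

Record term := Term { coef : R; qdeg : nat; rdeg : nat; mdeg : 'I_5 -> nat }.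

Definition term_fun t z : R :=
  coef t * cone_form z ^+ qdeg t * (rr z)^-1 ^+ rdeg t * monomial (mdeg t) z.

Definition term_ext t z : R := if cone_form z <= 0 then 0 else term_fun t z.

Definition terms_fun (s : seq term) z : R := \sum_(t <- s) term_fun t z.

Definition terms_ext (s : seq term) z : R := \sum_(t <- s) term_ext t z.

Definition term_partial (k : 'I_5) t : seq term :=
  [:: Term (coef t * (qdeg t)%:R * (2 * cone_sign R k)) (qdeg t).-1 (rdeg t) (incr_at k (mdeg t));
      Term (- coef t * (rdeg t)%:R * (k != ord0)%:R) (qdeg t) (rdeg t).+2 (incr_at k (mdeg t));
      Term (coef t * (mdeg t k)%:R) (qdeg t) (rdeg t) (decr_at k (mdeg t))].

Definition terms_partial k (s : seq term) : seq term := flatten (map (term_partial k) s).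

Definition mdeg_sum t : nat := \sum_(j < 5) mdeg t j.

(* [2 * qdeg t + mdeg_sum t - rdeg t] is the degree of homogeneity of [term_fun t]. *)
Definition term_order N t : bool :=
  (N <= qdeg t)%N && (rdeg t + N <= 2 * qdeg t + mdeg_sum t)%N.

Lemma differentiable_term_fun t y : 0 < rr y -> differentiable (term_fun t) y.
Proof.
move=> ry; have r0 : rr y != 0 by rewrite gt_eqF.
apply: differentiableM; last exact: differentiable_monomial.
apply: differentiableM; last exact/differentiable_exp/differentiableV/r0/differentiable_rr.
by apply: differentiableM => //; exact/differentiable_exp/differentiable_cone_form.
Qed.

Lemma is_derive_term_fun t y k : 0 < rr y ->
  is_derive y (ebase R k) (term_fun t) (terms_fun (term_partial k t) y).
Proof.
move=> ry; have r0 : rr y != 0 by rewrite gt_eqF.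
case: t => c p q a.
have dq := is_derive_exp p (is_derive_cone_form y k).
have dr := is_derive_exp q (is_derive_inv r0 (is_derive_rr k ry)).
have D := is_deriveM (is_deriveM (is_deriveM (is_derive_cst c y (ebase R k)) dq) dr)
  (is_derive_monomial y k a).
refine (is_derive_eq D _); clear D dq dr.
rewrite /terms_fun !big_cons big_nil /term_fun /= !monomial_incr_at !fctE /GRing.scale /=.
case: p => [|p]; case: q => [|q] /=; rewrite ?expr0 ?mulr0 ?mul0r ?addr0 ?add0r.
all: rewrite -?exprVn ?exprS ?expr0; ring.
Qed.

Lemma terms_ext_nil : terms_ext [::] = cst 0.
Proof. by apply/funext => z; rewrite /terms_ext big_nil. Qed.

Lemma terms_ext_cons t s : terms_ext (t :: s) = term_ext t + terms_ext s.
Proof. by apply/funext => z; rewrite /terms_ext big_cons. Qed.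

Lemma terms_ext_cat s1 s2 z : terms_ext (s1 ++ s2) z = terms_ext s1 z + terms_ext s2 z.
Proof. exact: big_cat. Qed.

Lemma terms_partial_cons k t s :
  terms_partial k (t :: s) = term_partial k t ++ terms_partial k s.
Proof. by []. Qed.

Lemma near_cone_form_gt0 y : 0 < cone_form y -> \forall z \near y, 0 < cone_form z.
Proof.
move=> Qy; have := differentiable_continuous (differentiable_cone_form y).
by move/(cvgr_gt _); apply.
Qed.

Lemma near_cone_form_lt0 y : cone_form y < 0 -> \forall z \near y, cone_form z < 0.
Proof.
move=> Qy; have := differentiable_continuous (differentiable_cone_form y).
by move/(cvgr_lt _); apply.
Qed.

Lemma open_cone_form_lt0 : open [set z : V | cone_form z < 0].
Proof. by rewrite openE => z; exact: near_cone_form_lt0. Qed.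

Lemma monomial_norm_le a z (M : R) : `|z| <= M -> `|monomial a z| <= M ^+ (\sum_(j < 5) a j).
Proof.
move=> zM; rewrite /monomial normr_prod -prodrXr; apply: ler_prod => j _.
rewrite normr_ge0 normrX lerXn2r ?nnegrE ?normr_ge0 ?(le_trans _ zM) //.
exact: abs_coord_le_norm.
Qed.

Lemma norm_term_fun_le t z (A B M : R) : 0 < cone_form z ->
  cone_form z <= A -> (rr z)^-1 <= B -> `|z| <= M ->
  `|term_fun t z| <= `|coef t| * A ^+ qdeg t * B ^+ rdeg t * M ^+ mdeg_sum t.
Proof.
move=> Qz QA rB zM; have r0 : 0 <= (rr z)^-1 by rewrite invr_ge0 rr_ge0.
rewrite /term_fun !normrM !normrX (gtr0_norm Qz) (ger0_norm r0).
apply: ler_pM; rewrite ?mulr_ge0 ?exprn_ge0 ?normr_ge0 ?(ltW Qz) //; last first.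
  exact: monomial_norm_le.
apply: ler_pM; rewrite ?mulr_ge0 ?exprn_ge0 ?normr_ge0 ?(ltW Qz) ?lerXn2r ?nnegrE //.
- by rewrite ler_pM ?normr_ge0 ?exprn_ge0 ?(ltW Qz) ?lerXn2r ?nnegrE ?(ltW Qz) //;
    apply: le_trans QA; exact: ltW.
- exact: le_trans rB.
Qed.

Lemma term_ext_bound_origin t N : term_order N t ->
  \forall z \near (0 : V), `|term_ext t z| <= `|coef t| * 9 ^+ qdeg t * `|z| ^+ N.
Proof.
case/andP => _ hdeg; apply/(near_normP 0 (fun z => _ <= _)).
exists 1 => // z; rewrite subr0 => z1.
have C0 : 0 <= `|coef t| * 9 ^+ qdeg t * `|z| ^+ N by rewrite !mulr_ge0 ?exprn_ge0.
rewrite /term_ext; case: (lerP (cone_form z) 0) => Qz; first by rewrite normr0.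
set n := `|z|; have n0 : 0 < n.
  by rewrite -(pmulr_rgt0 _ (ltr0n _ 3)); apply: lt_le_trans (rr_le_norm z); exact: rr_gt0.
have Q9 : cone_form z <= 9 * n ^+ 2.
  apply: le_trans (cone_form_le_rr_sqr z) _.
  have -> : 9 * n ^+ 2 = (3 * n) ^+ 2 by ring.
  by rewrite lerXn2r ?nnegrE ?rr_ge0 ?mulr_ge0 ?(ltW n0) //; exact: rr_le_norm.
have rn : (rr z)^-1 <= n^-1 by rewrite lef_pV2 ?posrE ?rr_gt0 ?norm_le_rr.
have key : (n ^+ 2) ^+ qdeg t * n^-1 ^+ rdeg t * n ^+ mdeg_sum t <= n ^+ N.
  rewrite -exprM exprVn mulrAC -exprD ler_pdivrMr ?exprn_gt0 // -exprD.
  by rewrite ler_wiXn2l ?ltW // addnC.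
apply: le_trans (norm_term_fun_le t Qz Q9 rn (lexx n)) _.
rewrite exprMn -!mulrA ler_wpM2l // ler_wpM2l ?exprn_ge0 //.
by rewrite !mulrA.
Qed.

Lemma term_ext_bound_boundary t N y : (N <= qdeg t)%N ->
  cone_form y = 0 -> cd y ord0 != 0 ->
  exists C : R, \forall z \near y, `|term_ext t z| <= C * `|z - y| ^+ N.
Proof.
move=> Np Qy y0; set b := `|cd y ord0|; set M := `|y| + 1; set L := 6 * (M + `|y|).
have b0 : 0 < b by rewrite normr_gt0.
have M0 : 0 <= M by rewrite addr_ge0.
have L0 : 0 <= L by rewrite mulr_ge0 ?addr_ge0.
exists (`|coef t| * L ^+ qdeg t * (2 / b) ^+ rdeg t * M ^+ mdeg_sum t).
apply/(near_normP y (fun z => _ <= _)); exists (Num.min 1 (b / 2)).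
  by rewrite lt_min ltr01 divr_gt0.
move=> z; rewrite lt_min => /andP[zy1 zyb]; set n := `|z - y| in zy1 zyb *.
rewrite /term_ext; case: (lerP (cone_form z) 0) => Qz.
  by rewrite normr0 !mulr_ge0 ?exprn_ge0 ?divr_ge0 ?normr_ge0.
have zM : `|z| <= M.
  have -> : z = (z - y) + y by rewrite subrK.
  by apply: le_trans (ler_normD _ _) _; rewrite /M addrC lerD2l ltW.
have QL : cone_form z <= L * n.
  have := cone_form_lipschitz z y; rewrite Qy subr0 mulrA => /(le_trans (ler_norm _)).
  by move/le_trans; apply; rewrite ler_wpM2r ?ler_wpM2l ?lerD2r.
have rb : (rr z)^-1 <= 2 / b.
  rewrite -invf_div lef_pV2 ?posrE ?rr_gt0 ?divr_gt0 //.
  apply/ltW/le_lt_trans/abs_coord0_lt_rr => //.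
  have := ler_normD (cd y ord0 - cd z ord0) (cd z ord0); rewrite subrK -/b.
  have : `|cd y ord0 - cd z ord0| <= n.
    by rewrite -coordB; apply: le_trans (abs_coord_le_norm _ _) _; rewrite distrC.
  lra.
apply: le_trans (norm_term_fun_le t Qz QL rb zM) _.
rewrite exprMn -!mulrA !ler_wpM2l ?exprn_ge0 //.
rewrite [X in _ <= X]mulrA [X in _ <= X]mulrC.
rewrite ler_wpM2r ?mulr_ge0 ?exprn_ge0 ?divr_ge0 ?(ltW b0) //.
by apply: ler_wiXn2l; rewrite ?normr_ge0 ?ltW.
Qed.

Lemma eq0_of_cone_form_coord0 y : cone_form y = 0 -> cd y ord0 = 0 -> y = 0.
Proof.
move=> Qy y0; have rsq0 : rsq y = 0 by move: Qy; rewrite /cone_form y0 expr0n subr0.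
apply/matrixP => i j; rewrite (ord1 i) mxE -[y ord0 j]/(cd y j).
have [->//|j0] := eqVneq j ord0.
have := @psumr_eq0P _ _ (fun i : 'I_5 => i != ord0) (fun i => cd y i ^+ 2).
by move=> /(_ (fun i _ => sqr_ge0 _) rsq0 j j0) /eqP; rewrite sqrf_eq0 => /eqP.
Qed.

Lemma term_ext_bound t N y : term_order N t -> cone_form y <= 0 ->
  exists C : R, \forall z \near y, `|term_ext t z| <= C * `|z - y| ^+ N.
Proof.
move=> tN; rewrite le_eqVlt => /orP[/eqP Qy|Qy].
  have [y0|y0] := eqVneq (cd y ord0) 0; last first.
    by apply: term_ext_bound_boundary => //; case/andP: tN.
  rewrite (eq0_of_cone_form_coord0 Qy y0); exists (`|coef t| * 9 ^+ qdeg t).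
  by apply: filterS (term_ext_bound_origin tN) => z; rewrite subr0.
exists 0; apply: filterS (near_cone_form_lt0 Qy) => z Qz.
by rewrite /term_ext ifT ?normr0 ?mul0r // ltW.
Qed.

Lemma terms_ext_eq0 s y : cone_form y <= 0 -> terms_ext s y = 0.
Proof. by move=> Qy; rewrite /terms_ext big1 // => t _; rewrite /term_ext Qy. Qed.

Lemma terms_extE s y : 0 < cone_form y -> terms_ext s y = terms_fun s y.
Proof.
move=> Qy; apply: eq_bigr => t _.
by rewrite /term_ext ifF //; apply/negbTE; rewrite -ltNge.
Qed.

Lemma near_term_extE t y : 0 < cone_form y -> \forall z \near y, term_ext t z = term_fun t z.
Proof.
move=> Qy; apply: filterS (near_cone_form_gt0 Qy) => z Qz.
by rewrite /term_ext ifF //; apply/negbTE; rewrite -ltNge.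
Qed.

Lemma term_ext_differentiable t y k : term_order 2 t ->
  differentiable (term_ext t) y /\ 'D_(ebase R k) (term_ext t) y = terms_ext (term_partial k t) y.
Proof.
move=> t2; have [Qy|Qy] := lerP (cone_form y) 0.
  have [C tC] := term_ext_bound t2 Qy.
  have ty0 : term_ext t y = 0 by rewrite /term_ext Qy.
  have [dt d0] := differentiable_quadratic_bound ty0 tC.
  by split => //; rewrite terms_ext_eq0 // deriveE // d0.
have ext_fun := near_term_extE t Qy; have ry := rr_gt0 Qy.
split; first exact: near_eq_differentiable ext_fun (differentiable_term_fun t ry).
rewrite (near_eq_derive _ ext_fun) terms_extE //.
exact: (@derive_val _ _ _ _ _ _ _ (is_derive_term_fun t k ry)).
Qed.

Lemma term_ext_continuous t y : term_order 1 t -> {for y, continuous (term_ext t)}.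
Proof.
move=> t1; have [Qy|Qy] := lerP (cone_form y) 0.
  have [C tC] := term_ext_bound t1 Qy.
  have ty0 : term_ext t y = 0 by rewrite /term_ext Qy.
  apply: (continuous_at_linear_bound (C := C) ty0).
  by apply: filterS tC => z; rewrite expr1.
apply/differentiable_continuous/(near_eq_differentiable (near_term_extE t Qy)).
exact/differentiable_term_fun/rr_gt0.
Qed.

Lemma term_order_le M N t : (M <= N)%N -> term_order N t -> term_order M t.
Proof. by move=> MN /andP[h1 h2]; apply/andP; split; lia. Qed.

Lemma sum_incr_at k a : (\sum_(j < 5) incr_at k a j = (\sum_(j < 5) a j).+1)%N.
Proof.
rewrite (bigD1 k) //= [in RHS](bigD1 k) //= /incr_at eqxx addSn.
by congr (_ + _).+1%N; apply: eq_bigr => j /negbTE ->.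
Qed.

Lemma sum_decr_at k a : (\sum_(j < 5) decr_at k a j + (0 < a k) = \sum_(j < 5) a j)%N.
Proof.
rewrite (bigD1 k) //= [in RHS](bigD1 k) //= /decr_at eqxx.
rewrite (eq_bigr a); last by move=> j /negbTE ->.
by case: (a k) => [|n] /=; lia.
Qed.

Lemma term_order_partial N k t : term_order N.+1 t -> all (term_order N) (term_partial k t).
Proof.
case: t => c p q a /andP[/= hp hq].
have h1 := sum_incr_at k a; have h2 := sum_decr_at k a.
rewrite /= /term_order /mdeg_sum /= h1 andbT in hq *.
by move: h2; case: (0 < a k)%N => /= h2; apply/and3P; split; apply/andP; split; lia.
Qed.

Lemma terms_order_partial N k s :
  all (term_order N.+1) s -> all (term_order N) (terms_partial k s).
Proof.
elim: s => // t s IH /andP[tN sN].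
by rewrite terms_partial_cons all_cat term_order_partial //; exact: IH.
Qed.

Lemma terms_ext_differentiable s y k : all (term_order 2) s ->
  differentiable (terms_ext s) y /\
  is_derive y (ebase R k) (terms_ext s) (terms_ext (terms_partial k s) y).
Proof.
elim: s => [_|t s IH /andP[t2 s2]].
  by rewrite terms_ext_nil; split; [exact: differentiable_cst | exact: is_derive_cst].
have [ds Ds] := IH s2; have [dt Dt] := term_ext_differentiable y k t2.
rewrite terms_ext_cons terms_partial_cons terms_ext_cat -Dt.
split; first exact: differentiableD.
by apply: is_deriveD => //; exact/derivableP/diff_derivable.
Qed.

Lemma terms_ext_continuous s y : all (term_order 1) s -> {for y, continuous (terms_ext s)}.
Proof.
elim: s => [_|t s IH /andP[t1 s1]]; first by rewrite terms_ext_nil; exact: cst_continuous.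
by rewrite terms_ext_cons; apply: continuousD; [exact: term_ext_continuous | exact: IH].
Qed.

Lemma terms_ext_Ck j s (U : set V) : all (term_order j.+1) s -> Ck j (terms_ext s) U.
Proof.
elim: j s => [|j IH] s sj /=; first by move=> y _; exact: terms_ext_continuous.
have s2 : all (term_order 2) s by apply: sub_all sj => t; apply: term_order_le.
split=> [y _|i]; first by have [] := terms_ext_differentiable y ord0 s2.
have -> : partial i (terms_ext s) = terms_ext (terms_partial i s).
  apply/funext => y; have [_ Ds] := terms_ext_differentiable y i s2.
  exact: (@derive_val _ _ _ _ _ _ _ Ds).
exact/IH/terms_order_partial.
Qed.

End ConeTerms.

Section CkObstruction.
Variable R : realType.
Notation V := 'rV[R]_5.
Implicit Types (x y z : V) (f : V -> R) (U O : set V).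

Lemma Ck_succ j f U : Ck j.+1 f U -> Ck j f U.
Proof.
elim: j f => [|j IH] f /= [df dpf]; first by move=> x /df/differentiable_continuous.
by split => // i; apply: IH; exact: dpf.
Qed.

Lemma Ck_le i j f U : (i <= j)%N -> Ck j f U -> Ck i f U.
Proof.
move/subnK => <-; elim: (j - i)%N => // n IH fC.
by apply: IH; apply: Ck_succ; rewrite -addSn.
Qed.

Lemma Ck_iter_partial K f U (i : 'I_5) : Ck K f U ->
  (forall j, (j < K)%N -> forall x, U x -> differentiable (iter j (partial i) f) x) /\
  (forall x, U x -> {for x, continuous (iter K (partial i) f)}).
Proof.
elim: K f => [|K IH] f /=; first by [].
move=> [df /(_ i)/IH [IHd IHc]]; split => [[|j] jK x Ux /=|x Ux].
- exact: df.
- by rewrite -iterS iterSr; apply: IHd.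
- by rewrite -iterS iterSr; exact: IHc.
Qed.

Lemma Ck_flat_on_segments f U O (i : 'I_5) K Z : open O -> (forall x, O x -> f x = 0) ->
  Ck K f U -> U Z -> (forall d : R, 0 < d -> exists2 W, O W & `|W - Z| < d) ->
  forall e : R, 0 < e -> exists2 d : R, 0 < d & forall (p : V) (A B : R), A < B ->
    (forall t, A <= t <= B -> U (t *: ebase R i + p) /\ `|t *: ebase R i + p - Z| < d) ->
    O (A *: ebase R i + p) -> `|f (B *: ebase R i + p)| <= e * (B - A) ^+ K.
Proof.
move=> oO f0 fC UZ OZ e e0.
have [fd fK] := Ck_iter_partial i fC.
have iter0 j x : O x -> iter j (partial i) f x = 0.
  exact: (@iter_derive_eq0_on_open _ _ _ f (ebase R i) O j oO f0).
have /(cvgrPdist_lt (FF := nbhs_filter Z)) := fK Z UZ.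
move=> /(_ (e / 2)) /(_ _)/near_normP [|d d0 gZ]; first by rewrite divr_gt0.
exists d => // p A B AB seg OA.
have [W OW WZ] := OZ d d0.
have gZe : `|iter K (partial i) f Z| < e / 2 by have := gZ W WZ; rewrite (iter0 K W) // subr0.
pose psi j (t : R) := iter j (partial i) f (t *: ebase R i + p).
apply: (@iterated_mvt_bound _ psi) => // [j jK t /seg [Ut _]|j jK|t /seg [_ tZ]].
- exact/is_derive_along_line/fd.
- exact: iter0.
have := gZ _ tZ; rewrite /psi distrC => gt.
have := ler_normD (iter K (partial i) f Z)
  (iter K (partial i) f (t *: ebase R i + p) - iter K (partial i) f Z).
rewrite addrC subrK; lra.
Qed.

Lemma not_Ck_of_steep_segments f U O (i : 'I_5) K Z (G : R) :
  open O -> (forall x, O x -> f x = 0) -> U Z -> 0 < G ->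
  (forall d : R, 0 < d -> exists (p : V) (A B : R), [/\ A < B,
     forall t, A <= t <= B -> U (t *: ebase R i + p) /\ `|t *: ebase R i + p - Z| < d,
     O (A *: ebase R i + p) & G * (B - A) ^+ K <= `|f (B *: ebase R i + p)|]) ->
  ~ Ck K f U.
Proof.
move=> oO f0 UZ G0 steep fC.
have OZ d : 0 < d -> exists2 W, O W & `|W - Z| < d.
  move=> d0; have [p [A [B [AB seg OA _]]]] := steep d d0.
  by exists (A *: ebase R i + p) => //; case: (seg A); rewrite ?lexx ?ltW.
have [|d d0 flat] := @Ck_flat_on_segments f U O i K Z oO f0 fC UZ OZ (G / 2).
  by rewrite divr_gt0.
have [p [A [B [AB seg OA fB]]]] := steep d d0.
have := le_trans fB (flat p A B AB seg OA).
by rewrite ler_pM2r ?exprn_gt0 ?subr_gt0 //; lra.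
Qed.

End CkObstruction.

Section ProbePoints.
Variable R : realType.
Notation V := 'rV[R]_5.
Implicit Types z : V.
Local Notation cd := (@Defs.coord R).

Definition idx1 : 'I_5 := lift ord0 ord0.

(* The point [(x0, x1, c, c, c)]. *)
Definition probe (x0 x1 c : R) : V := \row_(j < 5) nth c [:: x0; x1] j.

Lemma coord_probe x0 x1 c j : cd (probe x0 x1 c) j = nth c [:: x0; x1] j.
Proof. by rewrite /Defs.coord mxE. Qed.

Lemma probe_along_idx1 t x0 x1 c : t *: ebase R idx1 + probe x0 x1 c = probe x0 (t + x1) c.
Proof.
apply/matrixP => i j; rewrite (ord1 i) !mxE eq_sym.
by case: j => -[|[|j]] //= _; rewrite ?mulr0 ?add0r ?mulr1.
Qed.

Lemma rsq_probe x0 x1 c : rsq (probe x0 x1 c) = x1 ^+ 2 + 3 * c ^+ 2.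
Proof. by rewrite /rsq big_mkcond !big_ord_recl big_ord0 !coord_probe /=; ring. Qed.

Lemma cone_form_probe x0 x1 c : cone_form (probe x0 x1 c) = x1 ^+ 2 + 3 * c ^+ 2 - x0 ^+ 2.
Proof. by rewrite /cone_form rsq_probe coord_probe. Qed.

Lemma rr_probe_le x0 x1 c : 0 <= c -> `|x1| <= 2 * c -> rr (probe x0 x1 c) <= 3 * c.
Proof.
move=> c0 x1c; rewrite -ler_sqr ?nnegrE ?rr_ge0 ?mulr_ge0 // rr_sqr rsq_probe.
have : x1 ^+ 2 <= (2 * c) ^+ 2 by rewrite -real_normK ?num_real // lerXn2r ?nnegrE ?mulr_ge0.
nra.
Qed.

Lemma norm_probe_le x0 x1 c (B : R) :
  `|x0| <= B -> `|x1| <= B -> `|c| <= B -> `|probe x0 x1 c| <= B.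
Proof.
move=> x0B x1B cB; apply: norm_le_coord => [|j]; first exact: le_trans cB.
by rewrite coord_probe; case: j => -[|[|j]] //= _; rewrite nth_nil.
Qed.

Lemma monomial_probe_ge a x0 x1 c : 0 <= c -> c <= x0 -> c <= x1 ->
  c ^+ (\sum_(j < 5) a j) <= monomial a (probe x0 x1 c).
Proof.
move=> c0 cx0 cx1; rewrite /monomial -prodrXr; apply: ler_prod => j _.
have cj : c <= cd (probe x0 x1 c) j.
  by rewrite coord_probe; case: j => -[|[|j]] //= _; rewrite nth_nil.
by rewrite exprn_ge0 // lerXn2r ?nnegrE ?(le_trans c0 cj).
Qed.

Lemma Bt_of_rr_lt (a : R) z : 0 < a -> rr z < a^-1 -> Bt a z.
Proof.
move=> a0 ra; have [Qz|Qz] := lerP (cone_form z) 0.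
  by right; rewrite /Lcone /= rr_le_abs_coord0E.
left; rewrite /Ba /ro /= rr_le_abs_coord0E ifF; last by apply/negbTE; rewrite -ltNge.
rewrite rr_sqr -/(cone_form z) divr_gt0 ?rr_gt0 //=.
apply: le_lt_trans ra; rewrite ler_pdivrMr ?rr_gt0 // -expr2 rr_sqr.
by rewrite lerBlDr lerDl sqr_ge0.
Qed.

Lemma Bt_probe (a : R) x0 x1 c : 0 < a -> 0 <= c <= (4 * a)^-1 -> `|x1| <= 2 * c ->
  Bt a (probe x0 x1 c).
Proof.
move=> a0 /andP[c0 ca] x1c; apply: Bt_of_rr_lt => //.
apply: le_lt_trans (rr_probe_le x0 c0 x1c) _.
move: ca; rewrite invfM => ca; have ia : 0 < a^-1 by rewrite invr_gt0.
have : 4^-1 * a^-1 = a^-1 / 4 by rewrite mulrC.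
lra.
Qed.

End ProbePoints.

Section GmlAsTerm.
Variable R : realType.
Notation V := 'rV[R]_5.
Implicit Types z : V.

Definition gml_term (m lr : nat) (l : 'I_5 -> nat) : term R := Term 1 m (m + lr) l.

Lemma gml_term_extE m lr l : gml m lr l = term_ext (gml_term m lr l).
Proof.
apply/funext => z; rewrite /gml /term_ext /term_fun /= rr_le_abs_coord0E.
case: ifP => // Qz; rewrite /ro rr_le_abs_coord0E Qz rr_sqr -/(cone_form z).
by rewrite /fl -/(monomial l z) -exprVn exprD exprMn; ring.
Qed.

Lemma term_order_gml_term N m lr l : (N <= m)%N ->
  (N + lr <= m + \sum_(j < 5) l j)%N -> term_order N (gml_term m lr l).
Proof. by rewrite /term_order /mdeg_sum /= => Nm Nl; apply/andP; split; lia. Qed.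

Lemma gml_eq0 m lr l z : cone_form z <= 0 -> gml m lr l z = 0.
Proof. by move=> Qz; rewrite /gml rr_le_abs_coord0E Qz. Qed.

Lemma gml_probe_ge m lr l x0 x1 c (q : R) : 0 < c -> 0 < q ->
  q <= cone_form (probe x0 x1 c) -> c <= x0 -> c <= x1 <= 2 * c ->
  q ^+ m * (3 * c)^-1 ^+ (m + lr) * c ^+ (\sum_(j < 5) l j) <= gml m lr l (probe x0 x1 c).
Proof.
move=> c0 q0 qQ cx0 /andP[cx1 x1c]; set z := probe x0 x1 c.
have Qz : 0 < cone_form z := lt_le_trans q0 qQ.
have x1c' : `|x1| <= 2 * c by rewrite ger0_norm // (le_trans (ltW c0)).
have rz : (3 * c)^-1 <= (rr z)^-1.
  by rewrite lef_pV2 ?posrE ?rr_gt0 ?mulr_gt0 //; exact: rr_probe_le (ltW c0) x1c'.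
rewrite gml_term_extE /term_ext ifF; last by apply/negbTE; rewrite -ltNge.
rewrite /term_fun /= mul1r.
have c0' := ltW c0; have q0' := ltW q0.
apply: ler_pM; rewrite ?mulr_ge0 ?exprn_ge0 ?invr_ge0 ?mulr_ge0 //; last first.
  exact: monomial_probe_ge.
apply: ler_pM; rewrite ?exprn_ge0 ?invr_ge0 ?mulr_ge0 //.
all: by apply: lerXn2r; rewrite ?nnegrE ?invr_ge0 ?mulr_ge0 ?rr_ge0 ?(ltW Qz).
Qed.

End GmlAsTerm.

Arguments gml_term {R}.

Section Witnesses.
Variable R : realType.
Notation V := 'rV[R]_5.

Lemma gml_not_Ck_boundary (a : R) m lr l : 0 < a -> ~ Ck m (gml m lr l) (Bt a).
Proof.
(* [(2c, c, c, c, c)] lies on [L_o] with [x0 <> 0]; moving [x1] by [t] changes the cone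
   form by [t^2 + 2 c t], so [gml] grows like [|t|^m] on one side and vanishes on the
   other. *)
move=> a0; set c := (4 * a)^-1.
have c0 : 0 < c by rewrite invr_gt0 mulr_gt0.
set G := c ^+ m * (3 * c)^-1 ^+ (m + lr) * c ^+ (\sum_(j < 5) l j).
have G0 : 0 < G by rewrite !mulr_gt0 ?exprn_gt0 ?invr_gt0 ?mulr_gt0.
have Bt_seg t : `|t| <= c -> Bt a (probe (2 * c) (t + c) c).
  move=> tc; apply: Bt_probe; rewrite ?(ltW c0) ?lexx //.
  by apply: le_trans (ler_normD _ _) _; rewrite (gtr0_norm c0); lra.
apply: (@not_Ck_of_steep_segments R (gml m lr l) (Bt a) _ idx1 m (probe (2 * c) c c) G)
  => //; first exact: open_cone_form_lt0.
- by move=> z /ltW /gml_eq0.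
- by rewrite -[c in probe _ c _]add0r; apply: Bt_seg; rewrite normr0 ltW.
move=> d d0; set tau := Num.min c (d / 2).
have tau0 : 0 < tau by rewrite lt_min c0 divr_gt0.
have tauc : tau <= c by rewrite ge_min lexx.
have taud : tau < d by rewrite gt_min; apply/orP; right; lra.
exists (probe (2 * c) c c), (- tau), tau; rewrite !probe_along_idx1; split.
- lra.
- move=> t /andP[t1 t2]; have tt : `|t| <= tau by rewrite ler_norml t1 t2.
  split; first by rewrite probe_along_idx1; apply: Bt_seg; exact: le_trans tauc.
  rewrite addrK normrZ.
  by apply: le_lt_trans (ler_wpM2l (normr_ge0 t) (norm_ebase _ _)) _; rewrite mulr1; lra.
- by rewrite /mkset cone_form_probe; nra.
apply: le_trans (ler_norm _).
have -> : tau - - tau = 2 * tau by ring.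
have -> : G * (2 * tau) ^+ m =
    (2 * c * tau) ^+ m * (3 * c)^-1 ^+ (m + lr) * c ^+ (\sum_(j < 5) l j).
  by rewrite /G !exprMn; ring.
apply: gml_probe_ge; rewrite ?mulr_gt0 ?cone_form_probe //; try lra; nra.
Qed.

Lemma gml_not_Ck_origin (a : R) m lr l K : 0 < a ->
  (2 * m + \sum_(j < 5) l j <= K + (m + lr))%N -> ~ Ck K (gml m lr l) (Bt a).
Proof.
move=> a0 hK; set G : R := 3^-1 ^+ (m + lr) / 2 ^+ K.
have G0 : 0 < G by rewrite divr_gt0 ?exprn_gt0 ?invr_gt0.
apply: (@not_Ck_of_steep_segments R (gml m lr l) (Bt a) _ idx1 K 0 G) => //.
- exact: open_cone_form_lt0.
- by move=> z /ltW /gml_eq0.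
- apply: Bt_of_rr_lt => //; apply: le_lt_trans (rr_le_norm 0) _.
  by rewrite normr0 mulr0 invr_gt0.
(* On the segment [(2c, t, c, c, c)], [0 <= t <= 2c], the cone form [t^2 - c^2] goes from
   [-c^2] to [3c^2], so [gml] reaches [~ c^(m + s_l)] over a length [2c -> 0]. *)
move=> d d0; set c := Num.min (d / 4) (Num.min 1 (4 * a)^-1).
have c0 : 0 < c by rewrite !lt_min ltr01 divr_gt0 ?invr_gt0 ?mulr_gt0.
have cd : c <= d / 4 by rewrite ge_min lexx.
have c1 : c <= 1 by rewrite !ge_min lexx orbT.
have ca : c <= (4 * a)^-1 by rewrite !ge_min lexx !orbT.
exists (probe (2 * c) 0 c), 0, (2 * c); split.
- by rewrite mulr_gt0.
- move=> t /andP[t0 t2]; have tc : `|t| <= 2 * c by rewrite ger0_norm.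
  rewrite probe_along_idx1 addr0 subr0; split; first by apply: Bt_probe; rewrite // (ltW c0) ca.
  apply: le_lt_trans (norm_probe_le _ tc _) _; rewrite ?gtr0_norm ?mulr_gt0 //; lra.
- by rewrite /mkset probe_along_idx1 addr0 cone_form_probe; nra.
rewrite probe_along_idx1 addr0 subr0; apply: le_trans (ler_norm _).
set s := (\sum_(j < 5) l j)%N.
have cK : c ^+ K * c ^+ (m + lr) <= c ^+ (2 * m) * c ^+ s.
  by rewrite -!exprD; apply: ler_wiXn2l; rewrite ?(ltW c0).
have lower : 3^-1 ^+ (m + lr) * c ^+ K <= (c ^+ 2) ^+ m * (3 * c)^-1 ^+ (m + lr) * c ^+ s.
  have -> : 3^-1 ^+ (m + lr) * c ^+ K =
      c ^+ K * c ^+ (m + lr) * (3^-1 ^+ (m + lr) * c^-1 ^+ (m + lr)).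
    by rewrite !exprVn; field; rewrite !expf_neq0 ?gt_eqF.
  by rewrite -exprM invfM exprMn [X in _ <= X]mulrAC ler_pM2r ?mulr_gt0 ?exprn_gt0 ?invr_gt0.
have -> : G * (2 * c) ^+ K = 3^-1 ^+ (m + lr) * c ^+ K.
  by rewrite /G exprMn; field; rewrite expf_neq0.
apply: le_trans lower _; apply: gml_probe_ge; rewrite ?exprn_gt0 ?cone_form_probe //; try lra; nra.
Qed.

End Witnesses.

Theorem lemma2 (R : realType) (a : R) (m lr : nat) (l : 'I_5 -> nat) :
  0 < a -> (0 < m)%N ->
  let k : int := Num.min (m%:Z) (m%:Z + sl lr l) in
  (forall j : nat, j%:Z < k -> Ck j (gml m lr l) (Bt a)) /\
  (forall j : nat, k <= j%:Z -> ~ Ck j (gml m lr l) (Bt a)).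
Proof.
move=> a0 _ k; set s := (\sum_(i < 5) l i)%N.
have slE : sl lr l = s%:Z - lr%:Z.
  by rewrite /sl addrC; congr (_ - _); apply/esym/(big_morph Posz PoszD).
rewrite /k slE; split=> j.
  rewrite lt_min => /andP[jm js].
  have -> : @gml R m lr l = terms_ext [:: gml_term m lr l].
    by rewrite terms_ext_cons terms_ext_nil gml_term_extE addr0.
  by apply: terms_ext_Ck; rewrite /= andbT; apply: term_order_gml_term; rewrite -/s; lia.
rewrite ge_min => /orP[jm|js] jC.
  by apply: (gml_not_Ck_boundary (lr := lr) (l := l) a0); apply: Ck_le jC; lia.
by apply: (gml_not_Ck_origin a0) jC; rewrite -/s; lia.
Qed.
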